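(* Let $\mathcal K$ be a filtered weak topological Kuranishi atlas and $k\ge1$, and suppose the tameness identities $U_{IJ}\cap U_{IK}=U_{I(J\cup K)}$ (for $I\subset J,K$) and $\phi_{IJ}(U_{IK})=U_{JK}\cap\mathfrak s_J^{-1}(\mathbb E_{IJ})$ (for $I\subset J\subset K$) hold for all $I,J,K\in\mathcal I_{\mathcal K}$ with $|I|\le k$. Then for all $I\subset J\subset K$ in $\mathcal I_{\mathcal K}$ with $|I|\le k$ the strong cocycle condition holds: $U_{IJ}\cap\phi_{IJ}^{-1}(U_{JK})=U_{IK}$ and $\widehat\Phi_{JK}\circ\widehat\Phi_{IJ}=\widehat\Phi_{IK}$ on $\mathrm{pr}_I^{-1}(U_{IK})$. In particular a tame weak topological Kuranishi atlas satisfies the strong cocycle condition and hence is a topological Kuranishi atlas.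
   Context: $X$ is a compact metrizable space. Charts: a topological Kuranishi chart for $X$ with open footprint $F\subset X$ is a tuple $\mathbf K=(U,\mathbb E,\mathfrak s,\psi)$ where $U$ is a separable, locally compact, metrizable space; $\mathbb E$ is a separable, locally compact, metrizable space with continuous maps $\mathrm{pr}:\mathbb E\to U$ and $0:U\to\mathbb E$ with $\mathrm{pr}\circ0=\mathrm{id}_U$; $\mathfrak s:U\to\mathbb E$ is continuous with $\mathrm{pr}\circ\mathfrak s=\mathrm{id}_U$; and $\psi$ is a homeomorphism from $\mathfrak s^{-1}(0):=\{x\in U:\mathfrak s(x)=0(x)\}$ onto $F$. Coordinate changes: for charts $\mathbf K_I,\mathbf K_J$ with $F_I\cap F_J\neq\emptyset$, a coordinate change $\widehat\Phi_{IJ}:\mathbf K_I\to\mathbf K_J$ consists of an open set $U_{IJ}\subset U_I$ with $U_{IJ}\cap\mathfrak s_I^{-1}(0_I)=\psi_I^{-1}(F_I\cap F_J)$ and a topological embedding $\widehat\Phi_{IJ}:\mathrm{pr}_I^{-1}(U_{IJ})\to\mathbb E_J$ such that there is a topological embedding $\phi_{IJ}:U_{IJ}\to U_J$ with $\mathrm{pr}_J\circ\widehat\Phi_{IJ}=\phi_{IJ}\circ\mathrm{pr}_I$, $0_J\circ\phi_{IJ}=\widehat\Phi_{IJ}\circ0_I$ and $\mathfrak s_J\circ\phi_{IJ}=\widehat\Phi_{IJ}\circ\mathfrak s_I$ on $U_{IJ}$, and $\phi_{IJ}=\psi_J^{-1}\circ\psi_I$ on $U_{IJ}\cap\mathfrak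 s_I^{-1}(0_I)$. Atlases: a covering family of basic charts is a finite family $(\mathbf K_i)_{i=1,\dots,N}$ of charts whose footprints cover $X$; $\mathcal I_{\mathcal K}$ is the set of nonempty $I\subset\{1,\dots,N\}$ with $F_I:=\bigcap_{i\in I}F_i\neq\emptyset$. Transition data consist of a chart $\mathbf K_J$ with footprint $F_J$ for each $J\in\mathcal I_{\mathcal K}$ with $|J|\ge2$ (and $\mathbf K_{\{i\}}:=\mathbf K_i$), and a coordinate change $\widehat\Phi_{IJ}:\mathbf K_I\to\mathbf K_J$ for all $I\subsetneq J$ in $\mathcal I_{\mathcal K}$. We set $U_{II}:=U_I$, $\phi_{II}:=\mathrm{id}_{U_I}$. For $I\subsetneq J\subsetneq K$ let $U_{IJK}:=U_{IJ}\cap\phi_{IJ}^{-1}(U_{JK})$. The triple satisfies the weak cocycle condition if $\widehat\Phi_{JK}\circ\widehat\Phi_{IJ}=\widehat\Phi_{IK}$ on $\mathrm{pr}_I^{-1}(U_{IJK}\cap U_{IK})$; the cocycle condition if in addition $U_{IJK}\subset U_{IK}$; the strong cocycle condition if in addition $U_{IJK}=U_{IK}$. A weak topological Kuranishi atlas $\mathcal K$ is a covering family with transition data satisfying the weak cocycle condition for all such triples; a topological Kuranishi atlas is one satisfying the cocycle condition for all triples. Filtrations: a weak topological Kuranishi atlas is filtered if it is equipped with closed subsets $\mathbb E_{IJ}\subset\mathbb E_J$ for all $J\in\mathcal I_{\mathcal K}$ and $I\subset J$ (including $I=\emptyset$) such that (i) $\mathbb E_{JJ}=\mathbb E_J$ and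 $\mathbb E_{\emptyset J}=\mathrm{im}\,0_J$; (ii) $\widehat\Phi_{JK}(\mathrm{pr}_J^{-1}(U_{JK})\cap\mathbb E_{IJ})=\mathbb E_{IK}\cap\mathrm{pr}_K^{-1}(\mathrm{im}\,\phi_{JK})$ for $I\subset J\subsetneq K$; (iii) $\mathbb E_{IJ}\cap\mathbb E_{HJ}=\mathbb E_{(I\cap H)J}$ for $I,H\subset J$; (iv) $\mathrm{im}\,\phi_{IJ}$ is an open subset of $\mathfrak s_J^{-1}(\mathbb E_{IJ})$ for $I\subsetneq J$. Tameness: a filtered weak topological Kuranishi atlas is tame if $U_{IJ}\cap U_{IK}=U_{I(J\cup K)}$ for all $I,J,K\in\mathcal I_{\mathcal K}$ with $I\subset J,K$ (where $U_{IL}:=\emptyset$ if $L\notin\mathcal I_{\mathcal K}$), and $\phi_{IJ}(U_{IK})=U_{JK}\cap\mathfrak s_J^{-1}(\mathbb E_{IJ})$ for all $I\subset J\subset K$ in $\mathcal I_{\mathcal K}$ (equalities of indices allowed). *)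

From Stdlib Require Import Reals List.
From mathcomp Require Import all_boot.



Unset Printing Implicit Defensive.

(* Spaces: a carrier with a family of open sets.  All axioms of a       *)
(* topology follow from [metrizable] below, which is imposed wherever   *)
(* the paper says "metrizable".                                          *)
Record space := Space { pt :> Type; isOpen : (pt -> Prop) -> Prop }.

Definition isClosed {T : space} (A : T -> Prop) : Prop :=
  isOpen T (fun x => ~ A x).

Definition is_metric {T : Type} (d : T -> T -> R) : Prop :=
  (forall x y, d x y = R0 <-> x = y) /\
  (forall x y, d x y = d y x) /\
  (forall x y z, Rle (d x z) (Rplus (d x y) (d y z))).

Definition metrizable (T : space) : Prop :=
  exists d : T -> T -> R, is_metric d /\
    forall V : T -> Prop, isOpen T V <->
      (forall x, V x -> exists eps : R, Rlt R0 eps /\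
          forall y, Rlt (d x y) eps -> V y).

(* countable dense subset (possibly empty, hence [option]) *)
Definition separable (T : space) : Prop :=
  exists D : nat -> option (pt T),
    forall V, isOpen T V -> (exists x, V x) ->
      exists n x, D n = Some x /\ V x.

Definition compact_set {T : space} (C : T -> Prop) : Prop :=
  forall (Ix : Type) (V : Ix -> T -> Prop),
    (forall i, isOpen T (V i)) ->
    (forall x, C x -> exists i, V i x) ->
    exists l : list Ix, forall x, C x -> exists i, In i l /\ V i x.

Definition compact_space (T : space) : Prop := @compact_set T (fun _ : pt T => True).

Definition locally_compact (T : space) : Prop :=
  forall x : T, exists (V C : T -> Prop),
    isOpen T V /\ V x /\ (forall y, V y -> C y) /\ compact_set C.

Definition cont_on {T T' : space} (A : T -> Prop) (f : T -> T') : Prop :=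
  forall V, isOpen T' V -> exists W, isOpen T W /\
    forall x, A x -> (V (f x) <-> W x).

Definition continuous {T T' : space} (f : T -> T') : Prop :=
  cont_on (fun _ => True) f.

Definition embedding_on {T T' : space} (A : T -> Prop) (f : T -> T') : Prop :=
  (forall x y, A x -> A y -> f x = f y -> x = y) /\
  cont_on A f /\
  (forall W, isOpen T W -> exists V, isOpen T' V /\
     forall x, A x -> (W x <-> V (f x))).

Definition homeo_onto {T T' : space} (A : T -> Prop) (B : T' -> Prop)
    (f : T -> T') : Prop :=
  embedding_on A f /\ (forall x, A x -> B (f x)) /\
  (forall y, B y -> exists x, A x /\ f x = y).

Record chart (X : space) := Chart {
  cU : space; cE : space;
  cpr : cE -> cU; czero : cU -> cE; cs : cU -> cE;
  cpsi : cU -> X;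
  cF : X -> Prop }.
Arguments cU {X}. Arguments cE {X}. Arguments cpr {X}. Arguments czero {X}.
Arguments cs {X}. Arguments cpsi {X}. Arguments cF {X}.

Definition zeroset {X : space} (K : chart X) (x : cU K) : Prop :=
  cs K x = czero K x.

Definition is_chart {X : space} (K : chart X) : Prop :=
  isOpen X (cF K) /\
  separable (cU K) /\ locally_compact (cU K) /\ metrizable (cU K) /\
  separable (cE K) /\ locally_compact (cE K) /\ metrizable (cE K) /\
  continuous (cpr K) /\ continuous (czero K) /\ continuous (cs K) /\
  (forall x, cpr K (czero K x) = x) /\
  (forall x, cpr K (cs K x) = x) /\
  homeo_onto (zeroset K) (cF K) (cpsi K).

Definition is_coord_change {X : space} (K1 K2 : chart X)
    (U12 : cU K1 -> Prop) (phi : cU K1 -> cU K2) (Phi : cE K1 -> cE K2) : Prop :=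
  isOpen (cU K1) U12 /\
  (forall x, (U12 x /\ zeroset K1 x) <->
             (zeroset K1 x /\ cF K1 (cpsi K1 x) /\ cF K2 (cpsi K1 x))) /\
  embedding_on (fun e => U12 (cpr K1 e)) Phi /\
  embedding_on U12 phi /\
  (forall e, U12 (cpr K1 e) -> cpr K2 (Phi e) = phi (cpr K1 e)) /\
  (forall x, U12 x -> czero K2 (phi x) = Phi (czero K1 x)) /\
  (forall x, U12 x -> cs K2 (phi x) = Phi (cs K1 x)) /\
  (forall x, U12 x -> zeroset K1 x ->
     zeroset K2 (phi x) /\ cpsi K2 (phi x) = cpsi K1 x).

(* Filtered weak topological Kuranishi atlases, charts indexed by        *)
(* subsets I of {0,..,N-1} ('I_N).  Fields at indices outside the        *)
(* relevant range are junk.                                              *)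
Record atlas_data (X : space) (N : nat) := AtlasData {
  K : {set 'I_N} -> chart X;
  UU : forall I J : {set 'I_N}, cU (K I) -> Prop;
  phi : forall I J : {set 'I_N}, cU (K I) -> cU (K J);
  Phi : forall I J : {set 'I_N}, cE (K I) -> cE (K J);
  EE : forall I J : {set 'I_N}, cE (K J) -> Prop
}.
Arguments K {X N}. Arguments UU {X N}. Arguments phi {X N}.
Arguments Phi {X N}. Arguments EE {X N}.

Section AtlasDefs.
Variables (X : space) (N : nat) (A : atlas_data X N).

Definition Kb (i : 'I_N) : chart X := K A [set i].

Definition inI (I : {set 'I_N}) : Prop :=
  I != set0 /\ exists x, forall i, i \in I -> cF (Kb i) x.

Definition Zs (I : {set 'I_N}) := zeroset (K A I).
Definition prI (I : {set 'I_N}) := cpr (K A I).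
Definition sI (I : {set 'I_N}) := cs (K A I).

Definition is_filtered_weak_atlas : Prop :=
  (forall i, is_chart (Kb i)) /\
  (forall x : X, exists i, cF (Kb i) x) /\
  (forall J : {set 'I_N}, inI J -> is_chart (K A J)) /\
  (forall J : {set 'I_N}, inI J -> forall x, cF (K A J) x <-> forall i, i \in J -> cF (Kb i) x) /\
  (forall I J : {set 'I_N}, inI I -> inI J -> I \proper J ->
     is_coord_change (K A I) (K A J) (UU A I J) (phi A I J) (Phi A I J)) /\
  (forall I x, UU A I I x) /\
  (forall I x, phi A I I x = x) /\
  (forall I e, Phi A I I e = e) /\
  (forall I J L : {set 'I_N}, inI I -> inI J -> inI L -> I \proper J -> J \proper L ->
     forall e, UU A I J (prI I e) -> UU A J L (phi A I J (prI I e)) ->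
       UU A I L (prI I e) -> Phi A J L (Phi A I J e) = Phi A I L e) /\
  (forall I J : {set 'I_N}, inI J -> I \subset J -> isClosed (EE A I J)) /\
  (forall J : {set 'I_N}, inI J -> forall e, EE A J J e) /\
  (forall J : {set 'I_N}, inI J -> forall e, EE A set0 J e <-> exists x, e = czero (K A J) x) /\
  (forall I J L : {set 'I_N}, inI J -> inI L -> I \subset J -> J \proper L ->
     forall e', (exists e, UU A J L (prI J e) /\ EE A I J e /\ Phi A J L e = e') <->
                (EE A I L e' /\ exists u, UU A J L u /\ phi A J L u = prI L e')) /\
  (forall I H J : {set 'I_N}, inI J -> I \subset J -> H \subset J ->
     forall e, (EE A I J e /\ EE A H J e) <-> EE A (I :&: H) J e) /\
  (forall I J : {set 'I_N}, inI I -> inI J -> I \proper J ->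
     exists V, isOpen (cU (K A J)) V /\
       forall y, (exists x, UU A I J x /\ phi A I J x = y) <->
                 (EE A I J (sI J y) /\ V y)).

(* U_{IL} with the convention U_{IL} := empty when L is not in I_K *)
Definition UUe (I L : {set 'I_N}) (x : cU (K A I)) : Prop := inI L /\ UU A I L x.

Definition tame_upto (k : nat) : Prop :=
  (forall I J L : {set 'I_N}, inI I -> inI J -> inI L -> #|I| <= k ->
     I \subset J -> I \subset L ->
     forall x, (UU A I J x /\ UU A I L x) <-> UUe I (J :|: L) x) /\
  (forall I J L : {set 'I_N}, inI I -> inI J -> inI L -> #|I| <= k ->
     I \subset J -> J \subset L ->
     forall y, (exists x, UU A I L x /\ phi A I J x = y) <->
               (UU A J L y /\ EE A I J (sI J y))).

End AtlasDefs.
Arguments Kb {X N}. Arguments inI {X N}. Arguments Zs {X N}. Arguments prI {X N}.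
Arguments sI {X N}. Arguments is_filtered_weak_atlas {X N}. Arguments UUe {X N}.
Arguments tame_upto {X N}.

From Stdlib Require Import Reals List.
From mathcomp Require Import all_boot.

(** For I ⊂ J ⊂ L, the first tameness identity with J ∪ L = L
    gives U_IL ⊂ U_IJ, and the second identity, read once with L and once
    with L := J, says that φ_IJ maps U_IL exactly onto the points of U_JL
    whose section lies in E_IJ, while every point of φ_IJ(U_IJ) has its
    section in E_IJ.  Injectivity of φ_IJ on U_IJ then identifies
    U_IJ ∩ φ_IJ^{-1}(U_JL) with U_IL, and on this domain the weak cocycle
    condition is the strong one. *)

Section FilteredWeakAtlas.
Context {X : space} {N : nat} {A : atlas_data X N}.
Hypothesis HA : is_filtered_weak_atlas A.

Lemma phi_refl I x : phi A I I x = x.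
Proof. by case: HA => _ [_ [_ [_ [_ [_ [+ _]]]]]]. Qed.

Lemma Phi_refl I e : Phi A I I e = e.
Proof. by case: HA => _ [_ [_ [_ [_ [_ [_ [+ _]]]]]]]. Qed.

Lemma weak_cocycle I J L : inI A I -> inI A J -> inI A L ->
  I \proper J -> J \proper L ->
  forall e, UU A I J (prI A I e) -> UU A J L (phi A I J (prI A I e)) ->
    UU A I L (prI A I e) -> Phi A J L (Phi A I J e) = Phi A I L e.
Proof. by case: HA => _ [_ [_ [_ [_ [_ [_ [_ [cocycle _]]]]]]]]; apply: cocycle. Qed.

Lemma phi_inj_on {I J} : inI A I -> inI A J -> I \subset J ->
  forall x y, UU A I J x -> UU A I J y -> phi A I J x = phi A I J y -> x = y.
Proof.
move=> hI hJ sIJ x y hx hy.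
case: (eqVneq I J) => [<-|nIJ]; first by rewrite !phi_refl.
have pIJ : I \proper J by rewrite properEneq nIJ sIJ.
case: HA => _ [_ [_ [_ [Hcc _]]]].
by case: (Hcc I J hI hJ pIJ) => _ [_ [_ [[inj _] _]]]; apply: inj.
Qed.

Section Tame.
Context {k : nat}.
Hypothesis Htame : tame_upto A k.
Context {I J L : {set 'I_N}}.
Hypotheses (hI : inI A I) (hJ : inI A J) (hL : inI A L).
Hypotheses (sIJ : I \subset J) (sJL : J \subset L) (cardI : #|I| <= k).

Lemma tame_UU_sub x : UU A I L x -> UU A I J x.
Proof.
move=> hx.
have sIL : I \subset L by apply: subset_trans sJL.
have := proj2 ((proj1 Htame) I J L hI hJ hL cardI sIJ sIL x).
by rewrite (setUidPr sJL) => /(_ (conj hL hx)) [].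
Qed.

Lemma tame_phi_UU x : UU A I L x -> UU A J L (phi A I J x).
Proof.
move=> hx.
have := proj1 ((proj2 Htame) I J L hI hJ hL cardI sIJ sJL (phi A I J x)).
by move=> /(_ (ex_intro _ x (conj hx erefl))) [].
Qed.

Lemma tame_phi_EE x : UU A I J x -> EE A I J (sI A J (phi A I J x)).
Proof.
move=> hx.
have := proj1 ((proj2 Htame) I J J hI hJ hJ cardI sIJ (subxx J) (phi A I J x)).
by move=> /(_ (ex_intro _ x (conj hx erefl))) [].
Qed.

Lemma tame_phi_onto y : UU A J L y -> EE A I J (sI A J y) ->
  exists2 x, UU A I L x & phi A I J x = y.
Proof.
move=> hy hE.
have [x [hx <-]] :=
  proj2 ((proj2 Htame) I J L hI hJ hL cardI sIJ sJL y) (conj hy hE).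
by exists x.
Qed.

Lemma strong_cocycle_domain x :
  (UU A I J x /\ UU A J L (phi A I J x)) <-> UU A I L x.
Proof.
split=> [[hx hy]|hx]; last by split; [apply: tame_UU_sub | apply: tame_phi_UU].
have [x' hx' ex'] := tame_phi_onto _ hy (tame_phi_EE _ hx).
have -> // : x = x'.
by apply: (phi_inj_on hI hJ sIJ) => //; apply: tame_UU_sub.
Qed.

Lemma strong_cocycle_map e : UU A I L (prI A I e) ->
  Phi A J L (Phi A I J e) = Phi A I L e.
Proof.
move=> he.
case: (eqVneq I J) => [<-|nIJ]; first by rewrite Phi_refl.
case: (eqVneq J L) => [<-|nJL]; first by rewrite Phi_refl.
have pIJ : I \proper J by rewrite properEneq nIJ sIJ.
have pJL : J \proper L by rewrite properEneq nJL sJL.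
have [hIJ hJL] := proj2 (strong_cocycle_domain (prI A I e)) he.
exact: weak_cocycle.
Qed.

End Tame.
End FilteredWeakAtlas.

Theorem mainTheorem4 (X : space) (HXc : compact_space X) (HXm : metrizable X)
  (N : nat) (A : atlas_data X N) (HA : is_filtered_weak_atlas A)
  (k : nat) (hk : 1 <= k) (Htame : tame_upto A k) :
  forall I J L : {set 'I_N}, inI A I -> inI A J -> inI A L ->
    I \subset J -> J \subset L -> #|I| <= k ->
    (forall x, (UU A I J x /\ UU A J L (phi A I J x)) <-> UU A I L x) /\
    (forall e, UU A I L (prI A I e) -> Phi A J L (Phi A I J e) = Phi A I L e).
Proof.
move=> I J L hI hJ hL sIJ sJL cardI; split.
- exact: (strong_cocycle_domain HA Htame hI hJ hL sIJ sJL cardI).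
- exact: (strong_cocycle_map HA Htame hI hJ hL sIJ sJL cardI).
Qed.
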